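(* The LCM matrix of any GCD closed set of positive integers with at most $7$ elements is invertible. Moreover, if $S$ is a GCD closed set with $8$ elements and $[S]$ is not invertible, then $(S,\mid)$ is isomorphic to the cube semilattice, i.e. the Boolean lattice of all subsets of a $3$-element set ordered by inclusion.
   Context: $S$ is GCD closed if $\gcd(x,y)\in S$ for all $x,y\in S$. The LCM matrix $[S]$ of $S=\{x_1,\dots,x_n\}$ has $(i,j)$ entry $\mathrm{lcm}(x_i,x_j)$. *)

From mathcomp Require Import all_boot all_order all_algebra.
Set Implicit Arguments. Unset Strict Implicit. Unset Printing Implicit Defensive.
Import GRing.Theory Num.Theory.

(* A finite set of positive integers is represented by a duplicate-free list. *)
Definition gcd_closed (S : seq nat) : bool :=
  all (fun x => all (fun y => gcdn x y \in S) S) S.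

Definition lcm_matrix (S : seq nat) : 'M[rat]_(size S) :=
  \matrix_(i < size S, j < size S) ((lcmn (nth 0 S i) (nth 0 S j))%:R : rat).

Definition iso_to_cube (S : seq nat) : Prop :=
  exists f : nat -> {set 'I_3},
    {in S &, injective f} /\
    (forall A : {set 'I_3}, exists2 x, x \in S & f x = A) /\
    {in S &, forall x y, (x %| y) = (f x \subset f y)}.

From mathcomp Require Import all_boot all_order all_algebra.
From mathcomp Require Import zify ring lra.
Set Implicit Arguments. Unset Strict Implicit. Unset Printing Implicit Defensive.
Import Order.TTheory GRing.Theory Num.Theory.

(* For a GCD-closed S, 1 / gcd(a, b) is the sum of psi(e) over the common
   divisors e of a and b in S, where psi is the Moebius inversion of 1 / a on
   (S, |); hence [S] = D E diag(psi) E^T D with D = diag(S) and E the zeta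
   matrix of (S, |), and [S] is invertible as soon as psi does not vanish.
   By inclusion-exclusion, psi(x) is the alternating sum, over the subsets A of
   the maximal proper divisors Y of x, of 1 / gcd(x, gcd A). This sum is
   positive when |Y| = 2, and removing from Y an element whose meets with the
   other elements have a largest one lowers it; such an element exists unless
   the meet-closure of x and Y has more than |Y| + 4 elements. In a set of at
   most 8 elements this leaves only |Y| = 3 with 8 distinct meets of x and Y,
   which then form all of S, ordered as the cube. *)

(* [incexc x Y] is the alternating sum over the subsets A of Y of
   (-1)^|A| / gcd(x, gcd A). *)
Fixpoint incexc (x : nat) (Y : seq nat) : rat :=
  if Y is y :: Y' then (incexc x Y' - incexc (gcdn x y) Y')%R
  else ((x%:R)^-1)%R.

Lemma incexc_consC x a b Y : incexc x [:: a, b & Y] = incexc x [:: b, a & Y].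
Proof. by rewrite /= gcdnAC; ring. Qed.

Lemma incexc_cat_cons x Y1 a Y2 :
  incexc x (Y1 ++ a :: Y2) = incexc x (a :: Y1 ++ Y2).
Proof. by elim: Y1 x => [//|b Y1 IH] x /=; rewrite !IH [RHS]incexc_consC. Qed.

Lemma perm_incexc x Y Z : perm_eq Y Z -> incexc x Y = incexc x Z.
Proof.
elim: Y x Z => [|a Y IH] x Z; first by move/perm_size; case: Z.
move=> pYZ; have aZ : a \in Z by rewrite -(perm_mem pYZ) mem_head.
case/splitPr: aZ pYZ => Z1 Z2 pYZ.
have pY : perm_eq Y (Z1 ++ Z2).
  by rewrite -(perm_cons a); apply: perm_trans pYZ _; rewrite -cat1s perm_catCA.
by rewrite incexc_cat_cons /= !(IH _ _ pY).
Qed.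

Lemma incexc_eq0 x Y : has (dvdn x) Y -> incexc x Y = 0%R.
Proof.
elim: Y x => [//|y Y IH] x /= /orP[xy|hY]; first by rewrite (gcdn_idPl xy) subrr.
by rewrite !IH ?subrr //; apply: sub_has hY => z; apply: dvdn_trans (dvdn_gcdl _ _).
Qed.

Lemma incexc_cons_dvd x d Y : has (dvdn d) Y -> incexc x (d :: Y) = incexc x Y.
Proof.
move=> dY /=; rewrite (incexc_eq0 (x := gcdn x d)) ?subr0 //.
by apply: sub_has dY => z; apply: dvdn_trans (dvdn_gcdr _ _).
Qed.

Lemma incexc_cat_dvd x Z Y :
  all (fun d => has (dvdn d) Y) Z -> incexc x (Z ++ Y) = incexc x Y.
Proof.
elim: Z => [//|d Z IH] /andP[dY ZY].
by rewrite cat_cons incexc_cons_dvd ?IH // has_cat dY orbT.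
Qed.

Lemma incexc_map_gcd z x Y : x %| z -> incexc x (map (gcdn z) Y) = incexc x Y.
Proof.
elim: Y x => [//|y Y IH] x xz /=.
by rewrite gcdnA (gcdn_idPl xz) !IH // (dvdn_trans (dvdn_gcdl _ _) xz).
Qed.

Lemma inv_le_half_inv (g y : nat) : 0 < y -> g %| y -> g != y ->
  ((y%:R)^-1 <= (g%:R)^-1 / 2 :> rat)%R.
Proof.
move=> y_gt0 gy gNy; have g_gt0 : 0 < g by apply: dvdn_gt0 gy.
have g2y : g.*2 <= y.
  move: y_gt0 gNy; rewrite -(divnK gy).
  by case: (y %/ g) => [|[|k]]; rewrite ?mul1n ?eqxx // => _ _; nia.
have -> : ((g%:R)^-1 / 2 = ((g.*2)%:R)^-1 :> rat)%R by rewrite -muln2 natrM invfM.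
by rewrite lef_pV2 ?posrE ?ltr0n ?double_gt0 ?ler_nat // (leq_trans _ g2y).
Qed.

Lemma incexc2_gt0 x y1 y2 : 0 < x -> y1 %| x -> y2 %| x ->
  ~~ (y1 %| y2) -> ~~ (y2 %| y1) -> (0 < incexc x [:: y1; y2])%R.
Proof.
move=> x_gt0 y1x y2x y12 y21 /=; rewrite (gcdn_idPr y1x) (gcdn_idPr y2x).
have y1_gt0 : 0 < y1 by apply: dvdn_gt0 x_gt0 y1x.
have y2_gt0 : 0 < y2 by apply: dvdn_gt0 x_gt0 y2x.
set g := gcdn y1 y2.
have g_gt0 : 0 < g by rewrite gcdn_gt0 y1_gt0.
have gNy1 : g != y1 by apply: contra y12 => /eqP <-; apply: dvdn_gcdr.
have gNy2 : g != y2 by apply: contra y21 => /eqP <-; apply: dvdn_gcdl.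
have := inv_le_half_inv y1_gt0 (dvdn_gcdl _ _) gNy1.
have := inv_le_half_inv y2_gt0 (dvdn_gcdr _ _) gNy2.
have : (0 < (x%:R)^-1 :> rat)%R by rewrite invr_gt0 ltr0n.
have : (0 < (g%:R)^-1 :> rat)%R by rewrite invr_gt0 ltr0n.
rewrite -/g; lra.
Qed.

(* [hull x Y t] is the least meet gcd(x, gcd A), A a subset of Y, above [t];
   its fixed points, listed in [closure x Y], are exactly these meets. *)
Definition gcd_above (Y : seq nat) (t : nat) : nat :=
  \big[gcdn/0]_(y <- Y | t %| y) y.
Definition hull (x : nat) (Y : seq nat) (t : nat) : nat := gcdn x (gcd_above Y t).
Definition hull_closed (x : nat) (Y : seq nat) (t : nat) : bool :=
  (t %| x) && (hull x Y t %| t).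
Definition closure (x : nat) (Y : seq nat) : seq nat :=
  [seq t <- divisors x | hull_closed x Y t].

Lemma dvdn_gcd_above u Y t :
  (u %| gcd_above Y t) = all (fun y => (t %| y) ==> (u %| y)) Y.
Proof.
rewrite /gcd_above; elim: Y => [|y Y IH]; first by rewrite big_nil dvdn0.
by rewrite big_cons /=; case: ifP => _; rewrite ?dvdn_gcd IH.
Qed.

Lemma dvdn_hullP u x Y t :
  reflect (u %| x /\ {in Y, forall y, t %| y -> u %| y}) (u %| hull x Y t).
Proof.
rewrite /hull dvdn_gcd dvdn_gcd_above.
apply: (iffP andP) => -[-> h]; split=> //; first by move=> y /(allP h) /implyP.
by apply/allP => y /h /implyP.
Qed.

Lemma hull_closedP x Y t : reflect
  (t %| x /\ forall u, u %| x -> {in Y, forall y, t %| y -> u %| y} -> u %| t)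
  (hull_closed x Y t).
Proof.
apply: (iffP andP) => -[tx h]; split=> //.
  by move=> u ux uY; apply: dvdn_trans h; apply/dvdn_hullP.
by apply: h; have /dvdn_hullP[] := dvdnn (hull x Y t).
Qed.

Lemma hull_closed_top x Y : hull_closed x Y x.
Proof. by apply/hull_closedP. Qed.

Lemma hull_closed_mem x Y y : y \in Y -> y %| x -> hull_closed x Y y.
Proof. by move=> yY yx; apply/hull_closedP; split=> // u _; apply. Qed.

Lemma hull_closed_gcd x Y t1 t2 :
  hull_closed x Y t1 -> hull_closed x Y t2 -> hull_closed x Y (gcdn t1 t2).
Proof.
move=> /hull_closedP[t1x cl1] /hull_closedP[t2x cl2].
apply/hull_closedP; split=> [|u ux h]; first exact: dvdn_trans (dvdn_gcdl _ _) t1x.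
rewrite dvdn_gcd cl1 ?cl2 // => y yY ty; apply: h yY _.
  exact: dvdn_trans (dvdn_gcdr _ _) ty.
exact: dvdn_trans (dvdn_gcdl _ _) ty.
Qed.

Lemma hull_closed_sub x Y Z t :
  {subset Z <= Y} -> hull_closed x Z t -> hull_closed x Y t.
Proof.
move=> ZY /hull_closedP[tx cl]; apply/hull_closedP; split=> // u ux h.
by apply: cl => // y /ZY; apply: h.
Qed.

Lemma mem_closure x Y t : 0 < x -> (t \in closure x Y) = hull_closed x Y t.
Proof.
by move=> x_gt0; rewrite mem_filter -dvdn_divisors // andb_idr // => /andP[].
Qed.

Lemma closure_uniq x Y : uniq (closure x Y).
Proof. exact/filter_uniq/divisors_uniq. Qed.

Definition meets (Y : seq nat) (y : nat) : seq nat := [seq gcdn y z | z <- rem y Y].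
Definition has_top (s : seq nat) : bool := has (fun m => all (dvdn^~ m) s) s.

Lemma bigmax_mem (s : seq nat) : s != [::] -> \max_(m <- s) m \in s.
Proof.
elim: s => [//|a s IH] _; rewrite big_cons inE.
case: s IH => [|b s] IH; first by rewrite big_nil maxn0 eqxx.
by rewrite /maxn; case: ltnP; rewrite ?eqxx // IH ?orbT.
Qed.

Section ProperAntichain.

Variables (x : nat) (Y : seq nat).
Hypotheses (x_gt0 : 0 < x) (Y_uniq : uniq Y).
Hypothesis Y_proper : {in Y, forall y, (y %| x) && (y != x)}.
Hypothesis Y_anti : {in Y &, forall y y', y %| y' -> y = y'}.

Lemma Y_dvdn y : y \in Y -> y %| x.
Proof. by case/Y_proper/andP. Qed.

Lemma Y_gt0 y : y \in Y -> 0 < y.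
Proof. by move/Y_dvdn; apply: dvdn_gt0. Qed.

Lemma meet_in_closure y y' : y \in Y -> y' \in Y -> gcdn y y' \in closure x Y.
Proof.
move=> yY y'Y; rewrite mem_closure //.
by apply: hull_closed_gcd; apply: hull_closed_mem; rewrite ?Y_dvdn.
Qed.

Lemma dvdn2_notin t y1 y2 : y1 \in Y -> y2 \in Y -> y1 != y2 ->
  t %| y1 -> t %| y2 -> t \notin x :: Y.
Proof.
move=> y1Y y2Y y12 t1 t2; rewrite inE negb_or; apply/andP; split.
  apply: contra y12 => /eqP tx; move: (Y_proper y1Y); rewrite -tx.
  by rewrite eqn_dvd t1 => /andP[->].
apply: contra y12 => tY.
by rewrite -(Y_anti tY y1Y t1) -(Y_anti tY y2Y t2).
Qed.

Lemma size_closure_fresh L : uniq L -> {subset L <= closure x Y} ->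
  {in L, forall t, t \notin x :: Y} -> size Y + size L < size (closure x Y).
Proof.
move=> uL LC Lfresh.
have xNY : x \notin Y by apply/negP => /Y_proper; rewrite eqxx andbF.
have uxYL : uniq (x :: Y ++ L).
  rewrite cons_uniq cat_uniq Y_uniq uL mem_cat negb_or xNY /=.
  apply/andP; split; first by apply/negP => /Lfresh; rewrite mem_head.
  by rewrite andbT; apply/hasPn => t /Lfresh; rewrite inE negb_or => /andP[].
rewrite -(size_cat Y L) -[_ < _]/(size (x :: Y ++ L) <= _).
apply: uniq_leq_size => // t; rewrite inE mem_cat mem_closure //.
case/or3P => [/eqP->|tY|/LC]; [exact: hull_closed_top | | by rewrite mem_closure].
by apply: hull_closed_mem; rewrite ?Y_dvdn.
Qed.

Lemma closure_rem y :
  y \in Y -> {subset closure x (rem y Y) <= rem y (closure x Y)}.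
Proof.
move=> yY t; rewrite mem_rem_uniq ?closure_uniq // inE !mem_closure //.
move=> cl; rewrite (hull_closed_sub (@mem_rem _ y Y) cl) andbT.
apply: contraTneq cl => ->; apply/negP => /hull_closedP[_ cl].
have xy : x %| y.
  apply: cl => // z; rewrite mem_rem_uniq // inE => /andP[zy zY] yz.
  by rewrite (Y_anti yY zY yz) eqxx in zy.
by move: (Y_proper yY); rewrite eqn_dvd xy andbT => /andP[->].
Qed.

Lemma incomparable_meets y : y \in Y -> 1 < size Y -> ~~ has_top (meets Y y) ->
  exists y', exists y'', [/\ y' \in Y, y'' \in Y, y' != y, y'' != y &
    ~~ (gcdn y y' %| gcdn y y'') && ~~ (gcdn y y'' %| gcdn y y')].
Proof.
move=> yY sY; rewrite /has_top => /hasPn noTop.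
have s0 : meets Y y != [::].
  by rewrite -size_eq0 size_map size_rem //; case: (size Y) sY => [|[|]].
have aM := bigmax_mem s0; set a := \max_(m <- _) m in aM.
have /allPn[b bM ba] := noTop _ aM.
have le_ba : b <= a by apply: (leq_bigmax_seq (P := xpredT) (F := id)).
case/mapP: aM => y' + ea; case/mapP: bM => y'' + eb.
rewrite !mem_rem_uniq // !inE => /andP[y''y y''Y] /andP[y'y y'Y].
exists y', y''; split=> //; rewrite -ea -eb ba andbT.
apply: contra ba => ab; suff -> : b = a by [].
have b_gt0 : 0 < b by rewrite eb gcdn_gt0 Y_gt0.
by apply/eqP; rewrite eqn_leq le_ba (dvdn_leq b_gt0 ab).
Qed.

Lemma fresh_in3 a b c t : size (closure x Y) <= size Y + 4 ->
  uniq [:: a; b; c] -> {subset [:: a; b; c] <= closure x Y} ->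
  {in [:: a; b; c], forall s, s \notin x :: Y} ->
  t \in closure x Y -> t \notin x :: Y -> t \in [:: a; b; c].
Proof.
move=> sC u3 C3 F3 tC tF; apply: contraTT sC => tN; rewrite -ltnNge.
apply: (size_closure_fresh (L := [:: t; a; b; c])).
- by rewrite cons_uniq tN.
- by move=> s; rewrite inE => /predU1P[->|/C3].
- by move=> s; rewrite inE => /predU1P[->|/F3].
Qed.

(* If no element of [Y] has a top meet, two incomparable meets [a], [b] of
   [y0] and [gcd a b] leave no room for further fresh meets. Then the two
   incomparable meets of [y''] must be [a] and [b], so [a %| y''] and
   [a %| b]. *)
Lemma exists_top_meet : 2 < size Y -> size (closure x Y) <= size Y + 4 ->
  exists2 y, y \in Y & has_top (meets Y y).
Proof.
move=> sY sC; apply/hasP; apply: contraT => /hasPn noTop.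
have sY1 : 1 < size Y by apply: ltnW.
have y0Y : nth 0 Y 0 \in Y by rewrite mem_nth // (ltn_trans _ sY).
move: (nth 0 Y 0) y0Y => y0 y0Y.
have [y' [y'' [y'Y y''Y y'y0 y''y0 /andP[nab nba]]]] :=
  incomparable_meets y0Y sY1 (noTop _ y0Y).
set a := gcdn y0 y' in nab nba *; set b := gcdn y0 y'' in nab nba *.
set c := gcdn a b.
have fresh_abc : {in [:: a; b; c], forall s, s \notin x :: Y}.
  move=> s; rewrite !inE => /or3P[] /eqP->.
  - by apply: (dvdn2_notin y0Y y'Y); rewrite 1?eq_sym ?dvdn_gcdl ?dvdn_gcdr.
  - by apply: (dvdn2_notin y0Y y''Y); rewrite 1?eq_sym ?dvdn_gcdl ?dvdn_gcdr.
  apply: (dvdn2_notin y0Y y'Y); rewrite 1?eq_sym //.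
    exact: dvdn_trans (dvdn_gcdl _ _) (dvdn_gcdl _ _).
  exact: dvdn_trans (dvdn_gcdl _ _) (dvdn_gcdr _ _).
have C_abc : {subset [:: a; b; c] <= closure x Y}.
  have aC : a \in closure x Y by apply: meet_in_closure.
  have bC : b \in closure x Y by apply: meet_in_closure.
  move=> s; rewrite !inE => /or3P[] /eqP-> //.
  by move: aC bC; rewrite /c !mem_closure //; apply: hull_closed_gcd.
have u_abc : uniq [:: a; b; c].
  have ab : a != b by apply: contraNneq nab => ->.
  have ca : c != a by apply: contraNneq nab => <-; apply: dvdn_gcdr.
  have cb : c != b by apply: contraNneq nba => <-; apply: dvdn_gcdl.
  by rewrite /= !inE !negb_or ab (eq_sym a c) ca (eq_sym b c) cb.
have a_y'' : a %| y''.
  have [z' [z'' [z'Y z''Y z'y'' z''y'' /andP[n1 n2]]]] :=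
    incomparable_meets y''Y sY1 (noTop _ y''Y).
  have in_abc z : z \in Y -> z != y'' -> gcdn y'' z \in [:: a; b; c].
    move=> zY zy''; apply: fresh_in3 => //; first exact: meet_in_closure.
    by apply: (dvdn2_notin y''Y zY); rewrite 1?eq_sym ?dvdn_gcdl ?dvdn_gcdr.
  have := in_abc _ z'Y z'y''; have := in_abc _ z''Y z''y''.
  rewrite !inE => /or3P[] /eqP e2 /or3P[] /eqP e1; rewrite -?e1 -?e2 ?dvdn_gcdl //;
    by move: n1 n2; rewrite e1 e2 ?dvdnn ?dvdn_gcdl ?dvdn_gcdr.
by move: nab; rewrite /b dvdn_gcd dvdn_gcdl a_y''.
Qed.

End ProperAntichain.

Lemma incexc_rem x y Y : y \in Y -> y %| x ->
  incexc x Y = (incexc x (rem y Y) - incexc y (rem y Y))%R.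
Proof. by move=> yY yx; rewrite (perm_incexc x (perm_to_rem yY)) /= (gcdn_idPr yx). Qed.

Lemma incexc_top_lt0 y Z : 0 < y -> ~~ has (dvdn y) Z ->
  has_top (map (gcdn y) Z) -> (incexc y Z < 0)%R.
Proof.
move=> y_gt0 noMul /hasP[m mM top].
have pM : perm_eq (map (gcdn y) Z) (rem m (map (gcdn y) Z) ++ [:: m]).
  by rewrite perm_sym perm_catC perm_sym; apply: perm_to_rem.
rewrite -(incexc_map_gcd Z (dvdnn y)) (perm_incexc y pM) incexc_cat_dvd; last first.
  by apply/allP => d /mem_rem dM; rewrite /= orbF (allP top).
case/mapP: mM => z zZ ->{m top pM}; rewrite /= gcdnA gcdnn subr_lt0.
have yz_gt0 : 0 < gcdn y z by rewrite gcdn_gt0 y_gt0.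
rewrite ltf_pV2 ?posrE ?ltr0n // ltr_nat ltn_neqAle dvdn_leq ?dvdn_gcdl // andbT.
by apply: contra noMul => /eqP yz; apply/hasP; exists z; rewrite // -yz dvdn_gcdr.
Qed.

Lemma incexc_gt0 x Y : 0 < x -> uniq Y ->
  {in Y, forall y, (y %| x) && (y != x)} ->
  {in Y &, forall y y', y %| y' -> y = y'} -> 1 < size Y ->
  (2 < size Y -> size (closure x Y) <= size Y + 4) -> (0 < incexc x Y)%R.
Proof.
move=> x_gt0; have [n] := ubnP (size Y); elim: n Y => // n IH Y.
rewrite ltnS => sYn uY pY aY sY1 sC.
have [sY2|sY2] := ltnP 2 (size Y); last first.
  case: Y sY1 sY2 uY pY aY {sYn sC} => [|y1 [|y2 []]] //= _ _.
  rewrite !inE andbT => y12 pY aY.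
  have /andP[y1x _] := pY _ (mem_head _ _).
  have /andP[y2x _] : (y2 %| x) && (y2 != x) by apply: pY; rewrite !inE eqxx orbT.
  have y1Y : y1 \in [:: y1; y2] by rewrite mem_head.
  have y2Y : y2 \in [:: y1; y2] by rewrite !inE eqxx orbT.
  apply: incexc2_gt0 => //; apply: contra y12 => d; apply/eqP.
    exact: aY.
  by symmetry; apply: aY.
have [y yY top] := exists_top_meet x_gt0 uY pY aY sY2 (sC sY2).
have /andP[yx _] := pY _ yY.
have lt0 : (incexc y (rem y Y) < 0)%R.
  apply: incexc_top_lt0 top; first exact: dvdn_gt0 x_gt0 yx.
  apply/hasPn => z; rewrite mem_rem_uniq // inE => /andP[zy zY].
  by apply: contra zy => yz; rewrite (aY _ _ yY zY yz).
have gt0 : (0 < incexc x (rem y Y))%R.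
  have yC : y \in closure x Y by rewrite mem_closure // hull_closed_mem.
  have sC' := uniq_leq_size (closure_uniq _ _) (closure_rem x_gt0 uY pY aY yY).
  apply: IH; rewrite ?rem_uniq ?size_rem // -?subn1; first lia.
  - by move=> z /mem_rem; apply: pY.
  - by move=> z z' /mem_rem zY /mem_rem z'Y; apply: aY.
  - lia.
  - move=> _; apply: leq_trans sC' _; rewrite !size_rem // -!subn1 addnBAC.
      exact: leq_sub2r (sC sY2).
    exact: ltnW (ltnW sY2).
by rewrite (incexc_rem yY yx); lra.
Qed.

(* [psi S] is the Moebius inversion of [a |-> 1 / a] on (S, |); the fuel
   [a.+1] exceeds the length of every chain of divisors below [a]. *)
Fixpoint psi_rec (S : seq nat) (n a : nat) : rat :=
  if n is n'.+1 then
    ((a%:R)^-1 - \sum_(e <- S | (e %| a)%N && (e != a)) psi_rec S n' e)%R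
  else 0%R.
Definition psi (S : seq nat) (a : nat) : rat := psi_rec S a.+1 a.

Lemma triangular_eq0 (V : nmodType) (I : finType) (R : rel I) (m : I -> nat)
    (f : I -> V) :
  (forall i, R i i) -> (forall i j, R i j -> i != j -> m i < m j) ->
  (forall j, \sum_(i | R i j) f i = 0)%R -> forall j, f j = 0%R.
Proof.
move=> Rii Rm sum0 j; have [k] := ubnP (m j); elim: k j => // k IH j.
rewrite ltnS => mjk; have := sum0 j; rewrite (bigD1 j) //= big1 ?addr0 //.
by move=> i /andP[Rij ij]; apply: IH; apply: leq_trans (Rm _ _ Rij ij) mjk.
Qed.

Definition proper_divs (S : seq nat) (x : nat) : seq nat :=
  [seq y <- S | (y %| x) && (y != x)].
Definition max_proper_divs (S : seq nat) (x : nat) : seq nat :=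
  [seq y <- proper_divs S x | all (fun z => (y %| z) ==> (y == z)) (proper_divs S x)].

Lemma ltn_proper_dvdn e a : 0 < a -> e %| a -> e != a -> e < a.
Proof. by move=> a_gt0 ea eNa; rewrite ltn_neqAle eNa dvdn_leq. Qed.

Section Psi.

Variable S : seq nat.
Hypotheses (S_uniq : uniq S) (S_pos : all (fun x => 0 < x) S).

Lemma psi_rec_fuel n m a : 0 < a -> a < n -> a < m ->
  psi_rec S n a = psi_rec S m a.
Proof.
elim: n m a => [|n IH] [|m] a //= a_gt0 an am; congr (_ - _)%R.
rewrite big_seq_cond [RHS]big_seq_cond; apply: eq_bigr => e /and3P[eS ea eNa].
have ltea := ltn_proper_dvdn a_gt0 ea eNa.
by apply: IH; [exact: (allP S_pos) | exact: leq_trans ltea _ ..].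
Qed.

Lemma psiE a : 0 < a ->
  psi S a = ((a%:R)^-1 - \sum_(e <- S | (e %| a)%N && (e != a)) psi S e)%R.
Proof.
move=> a_gt0; rewrite [LHS]/psi /=; congr (_ - _)%R.
rewrite big_seq_cond [RHS]big_seq_cond; apply: eq_bigr => e /and3P[eS ea eNa].
by apply: psi_rec_fuel => //; [exact: (allP S_pos) | exact: ltn_proper_dvdn].
Qed.

Lemma sum_psi a : a \in S -> ((a%:R)^-1 = \sum_(e <- S | (e %| a)%N) psi S e)%R.
Proof.
move=> aS; rewrite -big_filter (bigD1_seq a) ?filter_uniq ?mem_filter ?dvdnn //=.
by rewrite big_filter_cond (psiE (allP S_pos _ aS)) subrK.
Qed.

Hypothesis S_gcd : gcd_closed S.

Lemma lcmn_psi a b : a \in S -> b \in S ->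
  ((lcmn a b)%:R
     = a%:R * b%:R * \sum_(e <- S | (e %| a)%N && (e %| b)%N) psi S e :> rat)%R.
Proof.
move=> aS bS; have gS : gcdn a b \in S by have /allP := allP S_gcd _ aS; apply.
have g_gt0 : 0 < gcdn a b by apply: (allP S_pos).
rewrite -(eq_bigl _ _ (fun e => dvdn_gcd e a b)) -(sum_psi gS) -natrM -muln_lcm_gcd.
by rewrite natrM mulfK // pnatr_eq0 -lt0n.
Qed.

(* By [lcmn_psi], column j of v [S] = 0 reads
   x_j * sum_(x_k | x_j) psi(x_k) W_k = 0,  where W_k = sum_(x_k | x_i) w_i
   and w_i = v_i x_i: two triangular systems, solved first for W, then for w. *)
Lemma lcm_matrix_ker (v : 'rV[rat]_(size S)) :
  {in S, forall a, psi S a != 0%R} ->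
  (v *m lcm_matrix S = 0)%R -> v = 0%R.
Proof.
move=> psi_neq0 vA; set n := size S in v vA *; pose x (i : 'I_n) := nth 0 S i.
have xS i : x i \in S by apply: mem_nth.
have x_gt0 i : 0 < x i by apply: (allP S_pos).
have x_inj i j : x i = x j -> i = j.
  by move/eqP; rewrite /x nth_uniq // => /eqP/val_inj.
pose w i := (v 0 i * (x i)%:R)%R.
pose W k := (\sum_(i | (x k %| x i)%N) w i)%R.
have psiW j : (\sum_(k | (x k %| x j)%N) psi S (x k) * W k = 0)%R.
  have := congr1 (fun M : 'rV_n => M 0%R j) vA; rewrite !mxE /=.
  have -> : (\sum_i v 0 i * lcm_matrix S i j = \sum_i \sum_k
      if (x k %| x i)%N && (x k %| x j)%N
      then (x j)%:R * (psi S (x k) * w i) else 0)%R.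
    apply: eq_bigr => i _.
    rewrite mxE (lcmn_psi (xS i) (xS j)) (big_nth 0) big_mkord.
    rewrite !big_distrr big_mkcond /=; apply: eq_bigr => k _.
    by case: ifP => _; rewrite /w ?mulr0 //; ring.
  have -> : (\sum_i \sum_k (if (x k %| x i)%N && (x k %| x j)%N
       then (x j)%:R * (psi S (x k) * w i) else 0) =
      (x j)%:R * \sum_(k | (x k %| x j)%N) psi S (x k) * W k)%R.
    rewrite exchange_big big_distrr [RHS]big_mkcond /=; apply: eq_bigr => k _.
    case: ifP => _; last by rewrite big1 // => i _; rewrite andbF.
    rewrite /W !big_distrr [RHS]big_mkcond /=; apply: eq_bigr => i _.
    by rewrite andbT; case: ifP; rewrite ?mulr0.
  by move/eqP; rewrite mulf_eq0 pnatr_eq0 eqn0Ngt x_gt0 => /eqP.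
have W0 k : W k = 0%R.
  have /eqP : (psi S (x k) * W k = 0)%R.
    apply: (triangular_eq0 (R := fun k i => x k %| x i) (m := x)
      (f := fun k => (psi S (x k) * W k)%R)) => // k' i ki.
    by rewrite ltn_neqAle dvdn_leq // andbT; apply: contra => /eqP/x_inj->.
  by rewrite mulf_eq0 (negbTE (psi_neq0 _ (xS k))) => /eqP.
pose M := \max_i x i.
have w0 : forall i, w i = 0%R.
  apply: (triangular_eq0 (R := fun i k => x k %| x i) (m := fun i => M - x i)) => //.
  move=> i k ki ik; have := @leq_bigmax _ x k; have := @leq_bigmax _ x i.
  have : x k < x i.
    by rewrite ltn_neqAle dvdn_leq // andbT; apply: contra ik => /eqP/x_inj->.
  rewrite -/M; lia.
apply/rowP => i; have /eqP := w0 i; rewrite mxE mulf_eq0 pnatr_eq0.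
by rewrite eqn0Ngt x_gt0 orbF => /eqP.
Qed.

Lemma lcm_matrix_unit : {in S, forall a, psi S a != 0%R} -> lcm_matrix S \in unitmx.
Proof.
move=> psi_neq0; rewrite -row_free_unit -kermx_eq0; apply/eqP/row_matrixP => i.
by rewrite row0; apply: lcm_matrix_ker => //; rewrite -row_mul mulmx_ker row0.
Qed.

Lemma gcd_closed_big x (L : seq nat) (P : pred nat) :
  x \in S -> {subset L <= S} -> gcdn x (\big[gcdn/0]_(y <- L | P y) y) \in S.
Proof.
move=> xS; elim: L => [|y L IH] LS; first by rewrite big_nil gcdn0.
have LS' : {subset L <= S} by move=> z zL; apply: LS; rewrite inE zL orbT.
rewrite big_cons; case: ifP => _; last exact: IH.
rewrite gcdnCA gcdnC; have /allP := allP S_gcd _ (IH LS'); apply.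
by apply: LS; rewrite mem_head.
Qed.

Lemma closure_sub x Y : x \in S -> {subset Y <= S} -> {subset closure x Y <= S}.
Proof.
move=> xS YS t; rewrite mem_filter => /andP[/andP[tx cl] _].
suff -> : t = hull x Y t by apply: gcd_closed_big.
by apply/eqP; rewrite eqn_dvd cl andbT; apply/dvdn_hullP; split=> // y _.
Qed.

Lemma sum_psi_incexc x Y : x \in S -> {subset Y <= S} ->
  (\sum_(e <- S | (e %| x)%N && all (fun y => ~~ (e %| y)%N) Y) psi S e
    = incexc x Y)%R.
Proof.
elim: Y x => [|y Y IH] x xS YS.
  by rewrite /= (sum_psi xS); apply: eq_bigl => e; rewrite andbT.
have YS' : {subset Y <= S} by move=> z zY; apply: YS; rewrite inE zY orbT.
have gS : gcdn x y \in S.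
  by have /allP := allP S_gcd _ xS; apply; apply: YS; rewrite mem_head.
rewrite /= -(IH _ xS YS') -(IH _ gS YS').
rewrite [X in (_ = X - _)%R](bigID (dvdn^~ y)) /=.
rewrite [X in (_ = X + _ - _)%R](eq_bigl
  (fun e => (e %| gcdn x y)%N && all (fun z => ~~ (e %| z)%N) Y)); last first.
  by move=> e; rewrite dvdn_gcd andbAC.
rewrite addrC addKr; apply: eq_bigl => e.
by case: (e %| x); case: (e %| y); case: (all _ _).
Qed.

Lemma psi_incexc x : x \in S -> psi S x = incexc x (proper_divs S x).
Proof.
move=> xS; have DS : {subset proper_divs S x <= S}.
  by move=> y; rewrite mem_filter => /andP[].
have x_top : all (fun y => ~~ (x %| y)) (proper_divs S x).
  apply/allP => y; rewrite mem_filter => /andP[/andP[yx yNx] _].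
  by apply: contra yNx => xy; rewrite eqn_dvd yx.
rewrite -(sum_psi_incexc xS DS) -big_filter.
rewrite (bigD1_seq x) ?filter_uniq ?mem_filter ?dvdnn ?xS ?x_top //=.
rewrite big_filter_cond big1_seq ?addr0 //.
move=> e /andP[/andP[/andP[ex /allP noDiv] eNx] eS].
by have := noDiv e; rewrite mem_filter ex eNx eS dvdnn => /(_ isT).
Qed.

Lemma max_proper_divs_above x d : d \in proper_divs S x ->
  exists2 y, y \in max_proper_divs S x & d %| y.
Proof.
move=> dD; set D := [seq z <- proper_divs S x | d %| z].
have dD' : d \in D by rewrite mem_filter dvdnn dD.
have D0 : D != [::] by apply: contraTneq dD' => ->.
have := bigmax_mem D0; set a := \max_(m <- D) m; rewrite mem_filter => /andP[da aD].
exists a => //; rewrite mem_filter aD andbT; apply/allP => z zD; apply/implyP => az.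
have z_gt0 : 0 < z by move: zD; rewrite mem_filter => /andP[_ /(allP S_pos)].
have za : z <= a.
  apply: (leq_bigmax_seq (P := xpredT) (F := id)) => //.
  by rewrite mem_filter (dvdn_trans da az).
by apply/eqP/anti_leq; rewrite za (dvdn_leq z_gt0 az).
Qed.

Lemma incexc_max_proper_divs x :
  incexc x (proper_divs S x) = incexc x (max_proper_divs S x).
Proof.
set D := proper_divs S x; set p := fun y => all (fun z => (y %| z) ==> (y == z)) D.
have pD : perm_eq D ([seq y <- D | ~~ p y] ++ [seq y <- D | p y]).
  by rewrite perm_sym perm_catC perm_filterC.
rewrite (perm_incexc x pD) incexc_cat_dvd //.
apply/allP => d; rewrite mem_filter => /andP[_ dD].
by have [y yM dy] := max_proper_divs_above dD; apply/hasP; exists y.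
Qed.

Lemma max_proper_divs_sub x : {subset max_proper_divs S x <= S}.
Proof. by move=> y; rewrite !mem_filter => /andP[_ /andP[]]. Qed.

Lemma max_proper_divs_proper x :
  {in max_proper_divs S x, forall y, (y %| x) && (y != x)}.
Proof. by move=> y; rewrite !mem_filter => /andP[_ /andP[/andP[-> ->]]]. Qed.

Lemma max_proper_divs_anti x :
  {in max_proper_divs S x &, forall y z, y %| z -> y = z}.
Proof.
move=> y z; rewrite mem_filter => /andP[/allP yMax _].
by rewrite mem_filter => /andP[_ zD] yz; apply/eqP; move: (yMax _ zD); rewrite yz.
Qed.

Lemma closure_max_proper_divs_sub x :
  x \in S -> {subset closure x (max_proper_divs S x) <= S}.
Proof. by move=> xS; apply: closure_sub xS (@max_proper_divs_sub x). Qed.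

Lemma size_closure_max_proper_divs x :
  x \in S -> size (closure x (max_proper_divs S x)) <= size S.
Proof.
move=> xS; apply: uniq_leq_size (closure_uniq _ _) _.
exact: closure_max_proper_divs_sub.
Qed.

Lemma psi_eq0 x : size S <= 8 -> x \in S -> psi S x = 0%R ->
  size (max_proper_divs S x) = 3 /\ 7 < size (closure x (max_proper_divs S x)).
Proof.
move=> sS xS; rewrite psi_incexc // incexc_max_proper_divs.
have := max_proper_divs_proper (x := x); have := max_proper_divs_anti (x := x).
have := size_closure_max_proper_divs xS; have : uniq (max_proper_divs S x).
  by rewrite !filter_uniq.
set Y := max_proper_divs S x => uY sC aY pY incexc0.
have x_gt0 : 0 < x by apply: (allP S_pos).
have [sY1|sY1] := leqP (size Y) 1.
  move: incexc0 pY; case: (Y) sY1 => [|y [|]] //= _.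
    by move/eqP; rewrite invr_eq0 pnatr_eq0 eqn0Ngt x_gt0.
  move=> /eqP; rewrite subr_eq0 => /eqP /invr_inj /eqP; rewrite eqr_nat => /eqP xy.
  by move/(_ y (mem_head _ _)) => /andP[yx]; rewrite xy (gcdn_idPr yx) eqxx.
have pos := incexc_gt0 x_gt0 uY pY aY sY1; rewrite incexc0 ltxx in pos.
have [sY3|sY3] := eqVneq (size Y) 3.
  split=> //; rewrite ltnNge; apply/negP => sC7.
  by suff: false by []; apply: pos; rewrite sY3.
suff: false by []; apply: pos => sY2; rewrite (leq_trans sC) //; apply: leq_trans sS _.
by case: (size Y) sY2 sY3 => [|[|[|[|k]]]] // _ _; rewrite addnC.
Qed.

End Psi.

Section Cube.

Variables (x : nat) (Y : seq nat).
Hypothesis x_gt0 : 0 < x.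

Definition cube_meet (A : {set 'I_3}) : nat :=
  gcdn x (\big[gcdn/0]_(i | i \notin A) nth 0 Y i).

Lemma dvdn_cube_meetP u (A : {set 'I_3}) :
  reflect (u %| x /\ forall i, i \notin A -> u %| nth 0 Y i) (u %| cube_meet A).
Proof.
rewrite /cube_meet dvdn_gcd; apply: (iffP andP) => -[-> h]; split=> //.
  exact/dvdn_biggcdP.
exact/dvdn_biggcdP.
Qed.

Lemma cube_meet_setI (A B : {set 'I_3}) :
  cube_meet (A :&: B) = gcdn (cube_meet A) (cube_meet B).
Proof.
have dvdE u :
    (u %| cube_meet (A :&: B)) = (u %| gcdn (cube_meet A) (cube_meet B)).
  rewrite dvdn_gcd; apply/dvdn_cube_meetP/andP => [[ux h]|].
    split; apply/dvdn_cube_meetP; split=> // i iN; apply: h.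
      by rewrite inE negb_and iN.
    by rewrite inE negb_and iN orbT.
  case=> /dvdn_cube_meetP[ux hA] /dvdn_cube_meetP[_ hB].
  by split=> // i; rewrite inE negb_and => /orP[/hA|/hB].
by apply/eqP; rewrite eqn_dvd -dvdE dvdnn dvdE dvdnn.
Qed.

Hypothesis size_Y : size Y = 3.

Lemma cube_meet_closed (A : {set 'I_3}) : hull_closed x Y (cube_meet A).
Proof.
have /dvdn_cube_meetP[hx hY] := dvdnn (cube_meet A).
apply/hull_closedP; split=> // u ux h; apply/dvdn_cube_meetP; split=> // i iA.
by apply: h (hY _ iA); rewrite mem_nth ?size_Y.
Qed.

Lemma hull_closed_cube_meet t :
  hull_closed x Y t -> t = cube_meet [set i : 'I_3 | ~~ (t %| nth 0 Y i)].
Proof.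
set A := [set i : 'I_3 | _]; case/hull_closedP => tx cl.
apply/eqP; rewrite eqn_dvd; apply/andP; split.
  by apply/dvdn_cube_meetP; split=> // i; rewrite inE negbK.
have /dvdn_cube_meetP[hx hY] := dvdnn (cube_meet A).
apply: cl => // y yY ty; have iY : index y Y < 3 by rewrite -size_Y index_mem.
by have := hY (Ordinal iY); rewrite inE negbK /= nth_index //; apply.
Qed.

Lemma cube_meet_inj : 7 < size (closure x Y) -> injective cube_meet.
Proof.
move=> sC; apply/injectiveP/negPn; rewrite -ltn_size_undup -leqNgt.
have -> : size [seq cube_meet A | A <- enum {set 'I_3}] = 8.
  by rewrite size_map -cardE -cardsT -powersetT card_powerset cardsT card_ord.
apply: leq_trans sC (uniq_leq_size (closure_uniq x Y) _) => t.
rewrite mem_closure // mem_undup => /hull_closed_cube_meet ->.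
by apply: map_f; rewrite mem_enum.
Qed.

Hypothesis cube_meet_injective : injective cube_meet.

Lemma dvdn_cube_meet (A B : {set 'I_3}) :
  (cube_meet A %| cube_meet B) = (A \subset B).
Proof.
apply/idP/idP => [dvdAB|/subsetP AB].
  by apply/setIidPl/cube_meet_injective; rewrite cube_meet_setI; apply/gcdn_idPl.
have /dvdn_cube_meetP[hx hY] := dvdnn (cube_meet A).
by apply/dvdn_cube_meetP; split=> // i iB; apply: hY; apply: contra iB; apply: AB.
Qed.

Lemma cube_meet_dvdn_nth (A : {set 'I_3}) (i : 'I_3) :
  (cube_meet A %| nth 0 Y i) = (i \notin A).
Proof.
have /dvdn_cube_meetP[hx hY] := dvdnn (cube_meet A).
apply/idP/idP => [dvd_i|/hY //]; apply: contraT => /negbNE iA.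
have : cube_meet A %| cube_meet (A :\ i).
  apply/dvdn_cube_meetP; split=> // j.
  by rewrite in_setD1 negb_and negbK => /orP[/eqP->|/hY].
by rewrite dvdn_cube_meet => /subsetP/(_ i iA); rewrite setD11.
Qed.

End Cube.

Lemma iso_to_cube_of_closure S x Y :
  uniq S -> size S = 8 -> 0 < x -> size Y = 3 ->
  {subset closure x Y <= S} -> 7 < size (closure x Y) -> iso_to_cube S.
Proof.
move=> uS sS x_gt0 sY CS sC; have inj := cube_meet_inj x_gt0 sY sC.
have sSC : size S <= size (closure x Y) by rewrite sS.
have [_ CeqS] := uniq_min_size (closure_uniq x Y) CS sSC.
pose f t := [set i : 'I_3 | ~~ (t %| nth 0 Y i)].
have fK A : f (cube_meet x Y A) = A.
  by apply/setP => i; rewrite inE cube_meet_dvdn_nth ?negbK.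
have S_meet t : t \in S -> t = cube_meet x Y (f t).
  by rewrite -CeqS mem_closure // => /hull_closed_cube_meet; apply.
exists f; split; [|split].
- by move=> t u /S_meet tE /S_meet uE ftu; rewrite tE uE ftu.
- move=> A; exists (cube_meet x Y A) => //.
  by rewrite -CeqS mem_closure // cube_meet_closed.
- move=> t u /S_meet tE /S_meet uE.
  by rewrite {1}tE {1}uE dvdn_cube_meet.
Qed.

Theorem theorem4p4 :
  (forall S : seq nat,
      uniq S -> all (fun x => 0 < x) S -> gcd_closed S -> size S <= 7 ->
      lcm_matrix S \in unitmx) /\
  (forall S : seq nat,
      uniq S -> all (fun x => 0 < x) S -> gcd_closed S -> size S = 8 ->
      lcm_matrix S \notin unitmx -> iso_to_cube S).
Proof.
split=> S uS pS gS sS.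
  apply: lcm_matrix_unit => // x xS; apply/eqP => psi0.
  have [_] := psi_eq0 uS pS gS (leqW sS) xS psi0.
  by rewrite ltnNge (leq_trans (size_closure_max_proper_divs gS xS) sS).
move=> notU.
have /allPn[x xS /negPn/eqP psi0] : ~~ all (fun a => psi S a != 0%R) S.
  by apply: contra notU => /allP; apply: lcm_matrix_unit.
have [sY sC] := psi_eq0 uS pS gS (eq_leq sS) xS psi0.
apply: iso_to_cube_of_closure uS sS (allP pS _ xS) sY _ sC.
exact: closure_max_proper_divs_sub.
Qed.
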